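(* Let $\alpha\in(0,1)$ be irrational with $\alpha=[0;a_1,a_2,\dots]$. For each $n\ge1$ define the block $C_n$ by: if $a_n\ge2$, $C_n=(q_{n-2}+q_{n-1},\,q_{n-2}+2q_{n-1},\,\dots,\,q_{n-2}+(a_n-1)q_{n-1})$ (the $a_n-1$ numbers $q_{n-2}+jq_{n-1}$, $1\le j\le a_n-1$); if $a_n=1$, $C_n=(2q_{n-2}+q_{n-1})$. Then the concatenation $C_1,C_2,C_3,\dots$, after deleting repeated values, is exactly the increasing enumeration $\mathfrak x_1=1<\mathfrak x_2<\cdots$ of $\mathfrak X$.
   Context: Let $\alpha$ be an irrational real number in $(0,1)$ with continued fraction expansion $\alpha=[0;a_1,a_2,\dots]$ (the $a_i$ positive integers). Convergents: $p_n/q_n=[0;a_1,\dots,a_n]$ for $n\ge1$, with $p_{-1}=1,q_{-1}=0,p_0=0,q_0=1$, so that $q_n=a_nq_{n-1}+q_{n-2}$ and $p_n=a_np_{n-1}+p_{n-2}$. For real $t\ge1$ define $\psi^{[2]*}_\alpha(t)=\min\{|q\alpha-p| : p,q\in\mathbb Z,\ 1\le q\le t,\ p/q\ne p_n/q_n\text{ for all }n\ge0\}$. Let $\mathfrak X$ be the set consisting of $1$ together with all integers $t\ge2$ such that $\psi^{[2]*}_\alpha(t)<\psi^{[2]*}_\alpha(t-1)$ (the points of discontinuity of $\psi^{[2]*}_\alpha$), enumerated increasingly as $\mathfrak x_1=1<\mathfrak x_2<\cdots$. *)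

From Stdlib Require Import Reals ZArith Arith List Lia Lra.
Import ListNotations.
Open Scope R_scope.

Fixpoint cf_rem (alpha : R) (n : nat) : R :=
  match n with
  | O => alpha
  | S m => / cf_rem alpha m - IZR (Int_part (/ cf_rem alpha m))
  end.

(* Partial quotients a_n = floor(1/r_{n-1}) for n >= 1 (so alpha = [0; a_1, a_2, ...]). *)
Definition cf_a (alpha : R) (n : nat) : nat :=
  Z.to_nat (Int_part (/ cf_rem alpha (pred n))).

(* Shifted denominators/numerators: qq k = q_{k-1}, pp k = p_{k-1}
   (so qq 0 = q_{-1} = 0, qq 1 = q_0 = 1, pp 0 = p_{-1} = 1, pp 1 = p_0 = 0). *)
Fixpoint qq (alpha : R) (k : nat) : nat :=
  match k with
  | O => 0%nat
  | S O => 1%nat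
  | S ((S m) as k') => (cf_a alpha k' * qq alpha k' + qq alpha m)%nat
  end.

Fixpoint pp (alpha : R) (k : nat) : nat :=
  match k with
  | O => 1%nat
  | S O => 0%nat
  | S ((S m) as k') => (cf_a alpha k' * pp alpha k' + pp alpha m)%nat
  end.

(* p/q differs from every convergent p_n/q_n, n >= 0 (cross-multiplied, q >= 1). *)
Definition not_convergent (alpha : R) (p q : Z) : Prop :=
  forall n : nat,
    (p * Z.of_nat (qq alpha (S n)) <> Z.of_nat (pp alpha (S n)) * q)%Z.

Definition admissible (alpha t : R) (p q : Z) : Prop :=
  (1 <= q)%Z /\ IZR q <= t /\ not_convergent alpha p q.

(* m is the minimum defining psi^{[2]*}_alpha(t). *)
Definition is_psi2star (alpha t m : R) : Prop :=
  (exists p q, admissible alpha t p q /\ Rabs (IZR q * alpha - IZR p) = m) /\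
  (forall p q, admissible alpha t p q -> m <= Rabs (IZR q * alpha - IZR p)).

(* Membership in the set X of discontinuity points. *)
Definition inX (alpha : R) (t : nat) : Prop :=
  t = 1%nat \/
  ((2 <= t)%nat /\
   exists m1 m2, is_psi2star alpha (INR t) m1 /\
                 is_psi2star alpha (INR t - 1) m2 /\ m1 < m2).

(* x is the j-th element (0-indexed) of X in increasing order. *)
Definition X_nth (alpha : R) (j x : nat) : Prop :=
  inX alpha x /\
  exists l : list nat, NoDup l /\ (forall y, In y l <-> (y < x)%nat /\ inX alpha y)
                       /\ length l = j.

Definition block (alpha : R) (n : nat) : list nat :=
  if (2 <=? cf_a alpha n)%nat
  then map (fun j => (qq alpha (pred n) + j * qq alpha n)%nat) (seq 1 (cf_a alpha n - 1))
  else [(2 * qq alpha (pred n) + qq alpha n)%nat].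

Definition blocks_prefix (alpha : R) (N : nat) : list nat :=
  concat (map (block alpha) (seq 1 N)).

Fixpoint dedup_aux (seen : list nat) (l : list nat) : list nat :=
  match l with
  | [] => []
  | x :: l' => if existsb (Nat.eqb x) seen then dedup_aux seen l'
               else x :: dedup_aux (x :: seen) l'
  end.

Definition dedup_first (l : list nat) : list nat := dedup_aux [] l.

Definition C_dedup_nth (alpha : R) (j x : nat) : Prop :=
  exists N, nth_error (dedup_first (blocks_prefix alpha N)) j = Some x.

Definition irrational (alpha : R) : Prop :=
  ~ exists p q : Z, q <> 0%Z /\ alpha = IZR p / IZR q.

From Stdlib Require Import Reals ZArith Arith List Lia Lra Classical Sorting.Sorted.
Import ListNotations.
Open Scope R_scope.

(* A fraction p/q with p >= 1 that is not a convergent is A (p_0, q_0) + B (p_{-1}, q_{-1})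
   with A, B >= 1.  Rewriting it in the basis of the next pair of consecutive convergents,
   as long as both coordinates stay positive, ends either at a multiple of a convergent
   (excluded) or at a negative coordinate, and then an entry of a block has no larger
   denominator and no larger error |q alpha - p|.  The block entries are themselves
   non-convergent, and their errors strictly decrease as their denominators increase.  So
   psi^{[2]*} drops exactly at the block entries, and the concatenated blocks are already
   non-decreasing. *)

Lemma StronglySorted_app {A : Type} (Rel : A -> A -> Prop) (l1 l2 : list A) :
  StronglySorted Rel l1 -> StronglySorted Rel l2 ->
  (forall x y, In x l1 -> In y l2 -> Rel x y) -> StronglySorted Rel (l1 ++ l2).
Proof.
  induction l1 as [|a l1 IH]; intros h1 h2 h; simpl; auto.
  apply StronglySorted_inv in h1 as [h1 h1a]. constructor.
  - apply IH; auto. intros; apply h; simpl; auto.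
  - apply Forall_app. split; auto.
    apply Forall_forall. intros y hy. apply h; simpl; auto.
Qed.

Lemma StronglySorted_map_seq (f : nat -> nat) (s n : nat) :
  (forall i j, (i <= j)%nat -> (f i <= f j)%nat) -> StronglySorted le (map f (seq s n)).
Proof.
  intro hf. revert s. induction n as [|n IH]; intro s; simpl; constructor; auto.
  apply Forall_forall. intros y hy.
  apply in_map_iff in hy as [i [<- hi]]. apply in_seq in hi. apply hf. lia.
Qed.

Lemma In_dedup_aux (seen l : list nat) (y : nat) :
  In y (dedup_aux seen l) <-> In y l /\ ~ In y seen.
Proof.
  revert seen. induction l as [|x l IH]; intro seen; simpl; [tauto|].
  destruct (existsb (Nat.eqb x) seen) eqn:e.
  - apply existsb_exists in e as [z [hz ez]]. apply Nat.eqb_eq in ez. subst z.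
    rewrite IH. split; [tauto|]. intros [[<-|h] h']; [contradiction|auto].
  - assert (hx : ~ In x seen).
    { intro hi. enough (existsb (Nat.eqb x) seen = true) by congruence.
      apply existsb_exists. exists x. split; auto. apply Nat.eqb_refl. }
    simpl. rewrite IH. simpl. split.
    + intros [<-|[h1 h2]]; [tauto|]. split; [auto|tauto].
    + intros [[<-|h1] h2]; [auto|].
      destruct (Nat.eq_dec x y); [left; auto|right; split; auto].
      intros [e'|e']; [congruence|contradiction].
Qed.

Lemma StronglySorted_dedup_aux (seen l : list nat) :
  StronglySorted le l -> StronglySorted lt (dedup_aux seen l).
Proof.
  revert seen. induction l as [|x l IH]; intros seen hs; simpl; [constructor|].
  apply StronglySorted_inv in hs as [hs hf]. rewrite Forall_forall in hf.
  destruct (existsb (Nat.eqb x) seen); auto.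
  constructor; auto. apply Forall_forall. intros y hy.
  apply In_dedup_aux in hy as [h1 h2]. specialize (hf y h1).
  destruct (Nat.eq_dec x y); [subst; exfalso; apply h2; left; auto|lia].
Qed.

Lemma StronglySorted_lt_NoDup (l : list nat) : StronglySorted lt l -> NoDup l.
Proof.
  induction 1 as [|a l _ IH hf]; constructor; auto.
  intro hi. rewrite Forall_forall in hf. specialize (hf a hi). lia.
Qed.

Lemma nth_error_StronglySorted_lt (L : list nat) (j x : nat) : StronglySorted lt L ->
  nth_error L j = Some x <-> In x L /\ length (filter (fun y => y <? x) L) = j.
Proof.
  intro hs. revert j. induction hs as [|h t hs IH hf]; intro j.
  - destruct j; simpl; split; try discriminate; tauto.
  - rewrite Forall_forall in hf.
    assert (hnil : forall z, (z <= h)%nat -> filter (fun y => y <? z) t = []).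
    { intros z hz. rewrite (filter_ext_in _ (fun _ => false)), filter_false; auto.
      intros y hy. apply Nat.ltb_ge. specialize (hf y hy). lia. }
    destruct j as [|j]; simpl.
    + split.
      * intro e. inversion e. subst. split; [left; auto|].
        rewrite Nat.ltb_irrefl, hnil; auto.
      * intros [[<-|hx] hl]; [reflexivity|].
        specialize (hf x hx). rewrite (proj2 (Nat.ltb_lt h x) hf) in hl. discriminate.
    + rewrite IH. split.
      * intros [hx hl]. specialize (hf x hx). split; [right; auto|].
        rewrite (proj2 (Nat.ltb_lt h x) hf). simpl. congruence.
      * intros [[<-|hx] hl].
        -- rewrite Nat.ltb_irrefl, hnil in hl; auto. discriminate.
        -- specialize (hf x hx). rewrite (proj2 (Nat.ltb_lt h x) hf) in hl. simpl in hl.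
           split; auto.
Qed.

Lemma minus_INR_1 t : (1 <= t)%nat -> INR (t - 1) = INR t - 1.
Proof. intro h. rewrite minus_INR by exact h. reflexivity. Qed.

Lemma exists_min_in_list {A : Type} (l : list A) (P : A -> Prop) (f : A -> R) :
  (exists x, In x l /\ P x) ->
  exists x, In x l /\ P x /\ forall y, In y l -> P y -> f x <= f y.
Proof.
  induction l as [|a l IH]; intros [x [hx hp]]; [destruct hx|].
  destruct (classic (exists x, In x l /\ P x)) as [ex|nex].
  - destruct (IH ex) as [m [hm1 [hm2 hm3]]].
    destruct (classic (P a)) as [pa|npa]; [destruct (Rle_dec (f a) (f m))|].
    + exists a. split; [left; auto|]. split; auto.
      intros y [<-|hy] py; [lra|]. specialize (hm3 y hy py). lra.
    + exists m. split; [right; auto|]. split; auto. intros y [<-|hy] py; [lra|auto].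
    + exists m. split; [right; auto|]. split; auto. intros y [<-|hy] py; [contradiction|auto].
  - destruct hx as [<-|hx]; [|exfalso; apply nex; eauto].
    exists a. split; [left; auto|]. split; auto.
    intros y [<-|hy] py; [lra|]. exfalso; apply nex; eauto.
Qed.

Section Approximation.
Variable al : R.

(* With the shifted indexing [qq al k = q_{k-1}], [quo k] is a_{k+1}, [err k] is
   q_{k-1} alpha - p_{k-1}, and block C_{k+1} is built from [qq al k], [qq al (S k)] and
   [quo k]. *)
Definition quo (k : nat) : nat := cf_a al (S k).
Definition qZ (k : nat) : Z := Z.of_nat (qq al k).
Definition pZ (k : nat) : Z := Z.of_nat (pp al k).
Definition err (k : nat) : R := IZR (qZ k) * al - IZR (pZ k).
Definition delta (k : nat) : R := Rabs (err k).
Definition comb_q (k : nat) (A B : Z) : Z := (A * qZ (S k) + B * qZ k)%Z.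
Definition comb_p (k : nat) (A B : Z) : Z := (A * pZ (S k) + B * pZ k)%Z.

Lemma qq_SS k : qq al (S (S k)) = (quo k * qq al (S k) + qq al k)%nat.
Proof. reflexivity. Qed.

Lemma pp_SS k : pp al (S (S k)) = (quo k * pp al (S k) + pp al k)%nat.
Proof. reflexivity. Qed.

Lemma qZ_SS k : qZ (S (S k)) = (Z.of_nat (quo k) * qZ (S k) + qZ k)%Z.
Proof. unfold qZ. rewrite qq_SS. lia. Qed.

Lemma pZ_SS k : pZ (S (S k)) = (Z.of_nat (quo k) * pZ (S k) + pZ k)%Z.
Proof. unfold pZ. rewrite pp_SS. lia. Qed.

Lemma comb_q_shift k A B : comb_q (S k) B (A - B * Z.of_nat (quo k)) = comb_q k A B.
Proof. unfold comb_q. rewrite qZ_SS. ring. Qed.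

Lemma comb_p_shift k A B : comb_p (S k) B (A - B * Z.of_nat (quo k)) = comb_p k A B.
Proof. unfold comb_p. rewrite pZ_SS. ring. Qed.

Lemma err_comb k A B :
  IZR (comb_q k A B) * al - IZR (comb_p k A B) = IZR A * err (S k) + IZR B * err k.
Proof. unfold comb_q, comb_p, err. rewrite !plus_IZR, !mult_IZR. ring. Qed.

Lemma err_SS k : err (S (S k)) = INR (quo k) * err (S k) + err k.
Proof. unfold err. rewrite qZ_SS, pZ_SS, !plus_IZR, !mult_IZR, <- INR_IZR_INZ. ring. Qed.

Lemma convergent_det k :
  (pZ k * qZ (S k) - pZ (S k) * qZ k = 1 \/ pZ k * qZ (S k) - pZ (S k) * qZ k = -1)%Z.
Proof.
  induction k as [|k IH]; [unfold pZ, qZ; simpl; lia|].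
  rewrite qZ_SS, pZ_SS. lia.
Qed.

Lemma convergent_err_scale p q M : (p * qZ M = pZ M * q)%Z ->
  (IZR q * al - IZR p) * IZR (qZ M) = IZR q * err M.
Proof. intro h. apply (f_equal IZR) in h. rewrite !mult_IZR in h. unfold err. nra. Qed.

Lemma quo_Int_part k : 0 < cf_rem al k < 1 ->
  INR (quo k) = IZR (Int_part (/ cf_rem al k)) /\ (1 <= quo k)%nat.
Proof.
  intros [h0 h1]. unfold quo, cf_a. simpl pred.
  assert (hx : 1 < / cf_rem al k) by (rewrite <- Rinv_1; apply Rinv_lt_contravar; lra).
  destruct (base_Int_part (/ cf_rem al k)) as [b0 b1].
  assert (hz : (0 < Int_part (/ cf_rem al k))%Z) by (apply lt_IZR; lra).
  rewrite INR_IZR_INZ, Z2Nat.id by lia. split; [reflexivity|lia].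
Qed.

Hypotheses (Hirr : irrational al) (Hal0 : 0 < al) (Hal1 : al < 1).

Lemma cf_rem_invariant k :
  0 < cf_rem al k < 1 /\ err (S k) = - cf_rem al k * err k /\ (1 <= qq al (S k))%nat.
Proof.
  induction k as [|k [[r0 r1] [He Hq]]].
  - unfold err, qZ, pZ; simpl. repeat split; lra || lia.
  - destruct (quo_Int_part k (conj r0 r1)) as [ha ha1].
    destruct (base_Int_part (/ cf_rem al k)) as [b0 b1].
    change (cf_rem al (S k)) with (/ cf_rem al k - IZR (Int_part (/ cf_rem al k))).
    assert (He2 : err (S (S k)) = - (/ cf_rem al k - IZR (Int_part (/ cf_rem al k))) * err (S k)).
    { rewrite err_SS, ha, He. field. lra. }
    assert (Hq2 : (1 <= qq al (S (S k)))%nat) by (rewrite qq_SS; nia).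
    assert (hne : / cf_rem al k - IZR (Int_part (/ cf_rem al k)) <> 0).
    { intro h0. rewrite h0 in He2. apply Hirr. exists (pZ (S (S k))), (qZ (S (S k))).
      assert (hQ : (1 <= qZ (S (S k)))%Z) by (unfold qZ; lia).
      split; [lia|]. apply IZR_le in hQ.
      unfold err in He2. field_simplify_eq; lra. }
    repeat split; lra || assumption.
Qed.

Lemma cf_rem_bounds k : 0 < cf_rem al k < 1.
Proof. apply cf_rem_invariant. Qed.

Lemma err_S k : err (S k) = - cf_rem al k * err k.
Proof. apply cf_rem_invariant. Qed.

Lemma qq_pos k : (1 <= qq al (S k))%nat.
Proof. apply cf_rem_invariant. Qed.

Lemma quo_pos k : (1 <= quo k)%nat.
Proof. apply (quo_Int_part k (cf_rem_bounds k)). Qed.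

Lemma delta_S k : delta (S k) = cf_rem al k * delta k.
Proof.
  unfold delta. rewrite err_S, Rabs_mult, Rabs_Ropp, Rabs_pos_eq; [ring|].
  pose proof (cf_rem_bounds k). lra.
Qed.

Lemma delta_pos k : 0 < delta k.
Proof.
  induction k as [|k IH].
  - unfold delta, err, qZ, pZ; simpl. rewrite Rabs_left; lra.
  - rewrite delta_S. pose proof (cf_rem_bounds k). nra.
Qed.

Lemma delta_S_lt k : delta (S k) < delta k.
Proof. rewrite delta_S. pose proof (cf_rem_bounds k). pose proof (delta_pos k). nra. Qed.

Lemma delta_SS k : delta k = INR (quo k) * delta (S k) + delta (S (S k)).
Proof.
  destruct (quo_Int_part k (cf_rem_bounds k)) as [ha _].
  rewrite ha, (delta_S (S k)), (delta_S k).
  change (cf_rem al (S k)) with (/ cf_rem al k - IZR (Int_part (/ cf_rem al k))).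
  pose proof (cf_rem_bounds k). field. lra.
Qed.

Lemma delta_antitone k m : (k <= m)%nat -> delta m <= delta k.
Proof. induction 1 as [|m _ IH]; [lra|]. pose proof (delta_S_lt m). lra. Qed.

(* Consecutive errors have opposite signs. *)
Lemma abs_err_comb k A B :
  Rabs (IZR (comb_q k A B) * al - IZR (comb_p k A B))
  = Rabs (IZR A * delta (S k) - IZR B * delta k).
Proof.
  rewrite err_comb, err_S, (delta_S k). unfold delta.
  replace (IZR A * (- cf_rem al k * err k) + IZR B * err k)
    with (err k * (IZR B - IZR A * cf_rem al k)) by ring.
  replace (IZR A * (cf_rem al k * Rabs (err k)) - IZR B * Rabs (err k))
    with (Rabs (err k) * (IZR A * cf_rem al k - IZR B)) by ring.
  rewrite !Rabs_mult, Rabs_Rabsolu, Rabs_minus_sym. reflexivity.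
Qed.

Lemma qq_le_S k : (qq al k <= qq al (S k))%nat.
Proof. destruct k; [simpl; lia|]. rewrite qq_SS. pose proof (quo_pos k). nia. Qed.

Lemma qq_monotone k m : (k <= m)%nat -> (qq al k <= qq al m)%nat.
Proof. induction 1 as [|m _ IH]; [lia|]. pose proof (qq_le_S m). lia. Qed.

Lemma qq_lower_bound k : (k + 1 <= qq al (S k) + qq al k)%nat.
Proof.
  induction k as [|k IH]; [simpl; lia|].
  rewrite qq_SS. pose proof (quo_pos k). pose proof (qq_pos k). nia.
Qed.

(* Entry [j] of block C_{k+1} (with [j = 0] for the single entry when a_{k+1} = 1) is the
   denominator [cand_q k j] of the intermediate fraction [cand_p k j / cand_q k j]. *)
Definition cand_index (k j : nat) : Prop :=
  ((2 <= quo k)%nat /\ (1 <= j <= quo k - 1)%nat) \/ (quo k = 1%nat /\ j = 0%nat).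
Definition cand_a (k j : nat) : Z := if (2 <=? quo k)%nat then Z.of_nat j else 1%Z.
Definition cand_b (k : nat) : Z := if (2 <=? quo k)%nat then 1%Z else 2%Z.
Definition cand_q (k j : nat) : Z := comb_q k (cand_a k j) (cand_b k).
Definition cand_p (k j : nat) : Z := comb_p k (cand_a k j) (cand_b k).
Definition cand_err (k j : nat) : R :=
  if (2 <=? quo k)%nat then delta k - INR j * delta (S k)
  else delta (S k) + 2 * delta (S (S k)).
Definition cand_first (k : nat) : nat := if (2 <=? quo k)%nat then 1%nat else 0%nat.

Lemma cand_index_first k : cand_index k (cand_first k).
Proof.
  pose proof (quo_pos k). unfold cand_index, cand_first.
  destruct (Nat.leb_spec 2 (quo k)); lia.
Qed.

Lemma cand_q_first_0 : cand_q 0 (cand_first 0) = 1%Z.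
Proof. unfold cand_q, cand_a, cand_b, cand_first. destruct (2 <=? quo 0)%nat; reflexivity. Qed.

Lemma cand_abs_err k j : cand_index k j ->
  Rabs (IZR (cand_q k j) * al - IZR (cand_p k j)) = cand_err k j.
Proof.
  intro hv. unfold cand_q, cand_p. rewrite abs_err_comb. unfold cand_a, cand_b, cand_err.
  pose proof (delta_SS k). pose proof (delta_pos (S k)). pose proof (delta_pos (S (S k))).
  destruct (Nat.leb_spec 2 (quo k)).
  - assert (INR j + 1 <= INR (quo k)) by (rewrite <- S_INR; apply le_INR; destruct hv; lia).
    rewrite <- INR_IZR_INZ, Rabs_left1; [ring|nra].
  - assert (hq : quo k = 1%nat) by (destruct hv; lia). rewrite hq in *. simpl INR in *.
    rewrite Rabs_left1; lra.
Qed.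

Lemma cand_q_ge_sum k j : cand_index k j -> (qZ (S k) + qZ k <= cand_q k j)%Z.
Proof.
  intro hv. unfold cand_q, comb_q, cand_a, cand_b, qZ.
  destruct (Nat.leb_spec 2 (quo k)); destruct hv; nia.
Qed.

Lemma cand_q_le_sum k j : cand_index k j -> (cand_q k j <= qZ (S (S k)) + qZ (S k))%Z.
Proof.
  intro hv. rewrite qZ_SS. pose proof (qq_le_S k).
  unfold cand_q, comb_q, cand_a, cand_b, qZ in *.
  destruct (Nat.leb_spec 2 (quo k)); destruct hv; nia.
Qed.

Lemma cand_err_lt_sum k j : cand_index k j -> cand_err k j < delta k + delta (S k).
Proof.
  intro hv. unfold cand_err.
  pose proof (delta_SS k). pose proof (delta_pos (S k)). pose proof (delta_S_lt (S k)).
  pose proof (pos_INR j).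
  destruct (Nat.leb_spec 2 (quo k)); [nra|].
  assert (hq : quo k = 1%nat) by (destruct hv; lia). rewrite hq in *. simpl INR in *. lra.
Qed.

Lemma cand_err_ge_sum k j : cand_index k j -> delta (S k) + delta (S (S k)) <= cand_err k j.
Proof.
  intro hv. unfold cand_err.
  pose proof (delta_SS k). pose proof (delta_pos (S k)). pose proof (delta_pos (S (S k))).
  destruct (Nat.leb_spec 2 (quo k)); [|lra].
  assert (INR j + 1 <= INR (quo k)) by (rewrite <- S_INR; apply le_INR; destruct hv; lia).
  nra.
Qed.

Lemma cand_order_within k j j' : cand_index k j -> cand_index k j' -> (j < j')%nat ->
  (cand_q k j < cand_q k j')%Z /\ cand_err k j' < cand_err k j.
Proof.
  intros hv hv' hj. unfold cand_q, comb_q, cand_a, cand_b, cand_err.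
  destruct (Nat.leb_spec 2 (quo k)); [|destruct hv, hv'; lia].
  pose proof (qq_pos k). pose proof (delta_pos (S k)).
  assert (INR j < INR j') by (apply lt_INR; exact hj).
  unfold qZ. split; [nia|nra].
Qed.

Lemma cand_order_across k j k' j' : cand_index k j -> cand_index k' j' -> (k < k')%nat ->
  (cand_q k j <= cand_q k' j')%Z /\ cand_err k' j' < cand_err k j.
Proof.
  intros hv hv' hk. split.
  - pose proof (cand_q_le_sum k j hv). pose proof (cand_q_ge_sum k' j' hv').
    pose proof (qq_monotone (S (S k)) (S k') ltac:(lia)).
    pose proof (qq_monotone (S k) k' ltac:(lia)).
    unfold qZ in *. lia.
  - pose proof (cand_err_ge_sum k j hv). pose proof (cand_err_lt_sum k' j' hv').
    pose proof (delta_antitone (S k) k' ltac:(lia)).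
    pose proof (delta_antitone (S (S k)) (S k') ltac:(lia)).
    lra.
Qed.

Lemma cand_err_decreasing k j k' j' : cand_index k j -> cand_index k' j' ->
  (cand_q k j < cand_q k' j')%Z -> cand_err k' j' < cand_err k j.
Proof.
  intros hv hv' hq.
  destruct (lt_eq_lt_dec k k') as [[hk| <-]|hk].
  - apply (cand_order_across k j k' j' hv hv' hk).
  - destruct (lt_eq_lt_dec j j') as [[hj| <-]|hj].
    + apply (cand_order_within k j j' hv hv' hj).
    + lia.
    + destruct (cand_order_within k j' j hv' hv hj). lia.
  - destruct (cand_order_across k' j' k j hv' hv hk). lia.
Qed.

Lemma comb_not_convergent_adjacent k A B M : A <> 0%Z -> B <> 0%Z -> (M = k \/ M = S k)%nat ->
  (comb_p k A B * qZ M <> pZ M * comb_q k A B)%Z.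
Proof.
  intros hA hB hM h. unfold comb_p, comb_q in h.
  pose proof (convergent_det k) as hd.
  destruct hM as [->| ->]; [apply hA|apply hB]; destruct hd; nia.
Qed.

Lemma cand_not_convergent k j : cand_index k j -> not_convergent al (cand_p k j) (cand_q k j).
Proof.
  intros hv m heq. fold (qZ (S m)) (pZ (S m)) in heq. set (M := S m) in heq.
  assert (hqM : (1 <= qZ M)%Z) by (unfold qZ, M; pose proof (qq_pos m); lia).
  pose proof (cand_q_ge_sum k j hv) as hge. pose proof (cand_q_le_sum k j hv) as hle.
  assert (hq : (1 <= cand_q k j)%Z) by (pose proof (qq_pos k); unfold qZ in *; lia).
  pose proof (convergent_err_scale _ _ M heq) as hs. apply (f_equal Rabs) in hs.
  rewrite !Rabs_mult, (cand_abs_err k j hv), !Rabs_pos_eq in hs by (apply IZR_le; lia).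
  fold (delta M) in hs. pose proof (delta_pos M).
  (* so |q alpha - p| = (q / q_M) delta_M: too large if M < k, too small if M > k + 1 *)
  apply IZR_le in hqM. apply IZR_le in hq.
  destruct (Nat.lt_ge_cases M k) as [hlt|hge'].
  - destruct k as [|k]; [lia|].
    assert (herr : cand_err (S k) j < delta M).
    { pose proof (cand_err_lt_sum (S k) j hv). pose proof (delta_SS k).
      pose proof (delta_antitone M k ltac:(lia)). pose proof (delta_pos (S k)).
      assert (1 <= INR (quo k)) by (apply (le_INR 1), quo_pos). nra. }
    assert (hqq : IZR (qZ M) <= IZR (cand_q (S k) j)).
    { apply IZR_le. pose proof (qq_monotone M (S (S k)) ltac:(lia)). unfold qZ in *. lia. }
    nra.
  - destruct (Nat.le_gt_cases M (S k)) as [hle'|hgt].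
    + apply (comb_not_convergent_adjacent k (cand_a k j) (cand_b k) M); [| |lia|exact heq];
        unfold cand_a, cand_b; destruct (Nat.leb_spec 2 (quo k)); destruct hv; lia.
    + assert (herr : 2 * delta (S (S k)) < cand_err k j).
      { pose proof (cand_err_ge_sum k j hv). pose proof (delta_S_lt (S k)). lra. }
      pose proof (delta_antitone (S (S k)) M ltac:(lia)).
      assert (hqq : IZR (cand_q k j) <= 2 * IZR (qZ M)).
      { rewrite <- (mult_IZR 2). apply IZR_le. pose proof (qq_le_S (S k)).
        pose proof (qq_monotone (S (S k)) M ltac:(lia)). unfold qZ in *. lia. }
      nra.
Qed.

Definition dominated (p q : Z) : Prop :=
  exists k j, cand_index k j /\ (cand_q k j <= q)%Z /\
              cand_err k j <= Rabs (IZR q * al - IZR p).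

Lemma comb_dominated_overshoot k A B : (1 <= A)%Z -> (1 <= B)%Z ->
  (A < B * Z.of_nat (quo k))%Z -> dominated (comb_p k A B) (comb_q k A B).
Proof.
  intros hA hB hlt. set (c := (B * Z.of_nat (quo k) - A)%Z).
  pose proof (delta_pos (S k)). pose proof (delta_pos (S (S k))).
  pose proof (delta_SS k) as hd. pose proof (quo_pos k).
  assert (hc : IZR c = IZR B * INR (quo k) - IZR A).
  { unfold c. rewrite minus_IZR, mult_IZR, <- INR_IZR_INZ. reflexivity. }
  assert (hc1 : 1 <= IZR c) by (apply IZR_le; unfold c; lia).
  assert (hB1 : 1 <= IZR B) by (apply IZR_le; lia).
  assert (herr : Rabs (IZR (comb_q k A B) * al - IZR (comb_p k A B))
                 = IZR c * delta (S k) + IZR B * delta (S (S k))).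
  { rewrite abs_err_comb, hd, Rabs_left1; nra. }
  unfold dominated. rewrite herr.
  assert (hQ : (0 <= qZ k /\ 1 <= qZ (S k))%Z) by (pose proof (qq_pos k); unfold qZ; lia).
  destruct (Z.eq_dec B 1) as [->|hB2].
  - (* (p, q) is itself an entry of block k *)
    exists k, (Z.to_nat A). split; [left; lia|].
    unfold cand_q, cand_a, cand_b, cand_err.
    destruct (Nat.leb_spec 2 (quo k)); [|lia].
    rewrite INR_IZR_INZ, Z2Nat.id by lia. split; [lia|nra].
  - destruct (Nat.eq_dec (quo k) 1) as [h1|h2].
    + exists k, 0%nat. split; [right; lia|].
      unfold cand_q, cand_a, cand_b, cand_err, comb_q.
      destruct (Nat.leb_spec 2 (quo k)); [lia|].
      assert (2 <= IZR B) by (apply IZR_le; lia). split; [nia|nra].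
    + (* the entry j = a_{k+1} - m has error m delta (S k) + delta (S (S k)) *)
      set (m := Z.min c (Z.of_nat (quo k) - 1)).
      exists k, (Z.to_nat (Z.of_nat (quo k) - m)). split; [left; unfold m, c in *; lia|].
      unfold cand_q, cand_a, cand_b, cand_err, comb_q.
      destruct (Nat.leb_spec 2 (quo k)); [|lia].
      assert (hm : (1 <= m <= Z.of_nat (quo k) - 1 /\ m <= c /\ Z.of_nat (quo k) - A <= m)%Z)
        by (unfold m, c in *; nia).
      rewrite INR_IZR_INZ, Z2Nat.id by lia. split; [nia|].
      assert (IZR m <= IZR c) by (apply IZR_le; lia).
      assert (2 <= IZR B) by (apply IZR_le; lia).
      rewrite minus_IZR, <- INR_IZR_INZ. nra.
Qed.

(* While both coordinates stay positive, pass to the basis of the convergents k + 1, k + 2;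
   the denominator bounds the number of steps. *)
Lemma comb_dominated p q : not_convergent al p q -> forall f k A B,
  (1 <= A)%Z -> (1 <= B)%Z -> p = comb_p k A B -> q = comb_q k A B ->
  (q <= Z.of_nat (k + f))%Z -> dominated p q.
Proof.
  intros hnc f. induction f as [|f IH]; intros k A B hA hB hp hq hf.
  - exfalso. pose proof (qq_lower_bound k). pose proof (qq_pos k).
    rewrite hq in hf. unfold comb_q, qZ in hf. nia.
  - rewrite <- comb_p_shift in hp. rewrite <- comb_q_shift in hq.
    destruct (Z.lt_trichotomy (A - B * Z.of_nat (quo k)) 0) as [hlt|[h0|hgt]].
    + rewrite comb_p_shift in hp. rewrite comb_q_shift in hq. subst.
      apply comb_dominated_overshoot; lia.
    + exfalso. apply (hnc (S k)). rewrite hp, hq, h0. unfold comb_p, comb_q, pZ, qZ. ring.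
    + apply (IH (S k) B (A - B * Z.of_nat (quo k))%Z); auto; lia.
Qed.

Lemma not_convergent_dominated p q : (1 <= q)%Z -> not_convergent al p q -> dominated p q.
Proof.
  intros hq hnc. destruct (Z.lt_trichotomy p 0) as [hp|[hp|hp]].
  - (* the first entry has denominator 1 and error below 1 + alpha <= |q alpha - p| *)
    exists 0%nat, (cand_first 0). split; [apply cand_index_first|].
    rewrite cand_q_first_0. split; [lia|].
    pose proof (cand_err_lt_sum 0 (cand_first 0) (cand_index_first 0)).
    assert (h0 : delta 0 = 1) by (unfold delta, err, qZ, pZ; simpl; rewrite Rabs_left; lra).
    assert (h1 : delta 1 = al) by (unfold delta, err, qZ, pZ; simpl; rewrite Rabs_right; lra).
    apply IZR_le in hq. assert (IZR p <= -1) by (apply IZR_le; lia).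
    rewrite Rabs_pos_eq; nra.
  - exfalso. apply (hnc 0%nat). subst. simpl. ring.
  - apply (comb_dominated p q hnc (Z.to_nat q) 0 q p); try lia;
      unfold comb_p, comb_q, pZ, qZ; simpl; ring.
Qed.

Definition is_cand_q (t : nat) : Prop := exists k j, cand_index k j /\ cand_q k j = Z.of_nat t.

Lemma admissible_INR_iff T p q : admissible al (INR T) p q <->
  (1 <= q)%Z /\ (q <= Z.of_nat T)%Z /\ not_convergent al p q.
Proof.
  unfold admissible. rewrite INR_IZR_INZ. split.
  - intros [h1 [h2 h3]]. apply le_IZR in h2. auto.
  - intros [h1 [h2 h3]]. apply IZR_le in h2. auto.
Qed.

Lemma cand_admissible T k j : cand_index k j -> (cand_q k j <= Z.of_nat T)%Z ->
  admissible al (INR T) (cand_p k j) (cand_q k j).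
Proof.
  intros hv hT. apply admissible_INR_iff.
  pose proof (cand_q_ge_sum k j hv). pose proof (qq_pos k). unfold qZ in *.
  repeat split; [lia|lia|apply cand_not_convergent, hv].
Qed.

Lemma psi2star_exists T : (1 <= T)%nat -> exists m, is_psi2star al (INR T) m.
Proof.
  intro hT.
  destruct (exists_min_in_list (list_prod (seq 0 (S T)) (seq 0 (S T)))
              (fun kj => cand_index (fst kj) (snd kj) /\ (cand_q (fst kj) (snd kj) <= Z.of_nat T)%Z)
              (fun kj => cand_err (fst kj) (snd kj)))
    as [[k0 j0] [_ [[hv hq] hmin]]].
  { exists (0%nat, cand_first 0). split.
    - apply in_prod; apply in_seq; unfold cand_first; destruct (2 <=? quo 0)%nat; lia.
    - split; [apply cand_index_first|]. simpl. rewrite cand_q_first_0. lia. }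
  exists (cand_err k0 j0). split.
  - exists (cand_p k0 j0), (cand_q k0 j0).
    split; [apply cand_admissible; auto|apply cand_abs_err; auto].
  - intros p q hadm. apply admissible_INR_iff in hadm as [h1 [h2 h3]].
    destruct (not_convergent_dominated p q h1 h3) as [k [j [hv' [hq' herr]]]].
    enough (cand_err k0 j0 <= cand_err k j) by lra.
    apply (hmin (k, j)); [|simpl; split; auto; lia].
    assert (hj : (Z.of_nat j <= cand_q k j)%Z).
    { pose proof (qq_pos k). unfold cand_q, comb_q, cand_a, cand_b, qZ in *.
      destruct (Nat.leb_spec 2 (quo k)); destruct hv'; nia. }
    pose proof (cand_q_ge_sum k j hv'). pose proof (qq_lower_bound k).
    apply in_prod; apply in_seq; unfold qZ in *; lia.
Qed.

Lemma inX_iff_is_cand_q t : inX al t <-> is_cand_q t.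
Proof.
  split.
  - intros [->|[h2 [m1 [m2 [hm1 [hm2 hlt]]]]]].
    + exists 0%nat, (cand_first 0). split; [apply cand_index_first|apply cand_q_first_0].
    + destruct hm1 as [[p [q [hadm heq]]] _].
      apply admissible_INR_iff in hadm as [q1 [q2 q3]].
      destruct (not_convergent_dominated p q q1 q3) as [k [j [hv [hq herr]]]].
      exists k, j. split; [exact hv|].
      destruct (Z.eq_dec (cand_q k j) (Z.of_nat t)) as [e|ne]; [exact e|exfalso].
      rewrite <- minus_INR_1 in hm2 by lia.
      assert (hadm : admissible al (INR (t - 1)) (cand_p k j) (cand_q k j))
        by (apply cand_admissible; [exact hv|lia]).
      pose proof (proj2 hm2 _ _ hadm) as hle. rewrite (cand_abs_err k j hv) in hle. lra.
  - intros [k [j [hv hq]]].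
    pose proof (cand_q_ge_sum k j hv). pose proof (qq_pos k). unfold qZ in *.
    destruct (Nat.eq_dec t 1) as [e|ne]; [left; exact e|right].
    split; [lia|].
    destruct (psi2star_exists t ltac:(lia)) as [m1 hm1].
    destruct (psi2star_exists (t - 1) ltac:(lia)) as [m2 hm2].
    exists m1, m2. rewrite <- minus_INR_1 by lia.
    split; [exact hm1|split; [exact hm2|]].
    pose proof (proj2 hm1 _ _ (cand_admissible t k j hv ltac:(lia))) as hle.
    rewrite (cand_abs_err k j hv) in hle.
    destruct hm2 as [[p [q [hadm heq]]] _].
    apply admissible_INR_iff in hadm as [q1 [q2 q3]].
    destruct (not_convergent_dominated p q q1 q3) as [k' [j' [hv' [hq' herr']]]].
    pose proof (cand_err_decreasing k' j' k j hv' hv ltac:(lia)). lra.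
Qed.

Lemma In_block k y : In y (block al (S k)) <-> exists j, cand_index k j /\ cand_q k j = Z.of_nat y.
Proof.
  unfold block, cand_index, cand_q, comb_q, cand_a, cand_b, qZ. simpl pred.
  change (cf_a al (S k)) with (quo k). pose proof (quo_pos k).
  destruct (Nat.leb_spec 2 (quo k)).
  - rewrite in_map_iff. split.
    + intros [j [<- hj]]. apply in_seq in hj. exists j. split; [left|]; lia.
    + intros [j [[[_ hj]|[hq _]] e]]; [|lia].
      exists j. split; [lia|apply in_seq; lia].
  - split.
    + intros [<-|[]]. exists 0%nat. split; [right|]; lia.
    + intros [j [_ e]]. left. lia.
Qed.

Lemma In_blocks_prefix N y : In y (blocks_prefix al N) <->
  exists k j, (k < N)%nat /\ cand_index k j /\ cand_q k j = Z.of_nat y.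
Proof.
  unfold blocks_prefix. rewrite in_concat. split.
  - intros [b [hb hy]]. apply in_map_iff in hb as [n [<- hn]]. apply in_seq in hn.
    destruct n as [|k]; [lia|]. apply In_block in hy as [j hj]. exists k, j. split; [lia|exact hj].
  - intros [k [j [hk hj]]]. exists (block al (S k)). split.
    + apply in_map_iff. exists (S k). split; [reflexivity|apply in_seq; lia].
    + apply In_block. exists j. exact hj.
Qed.

Lemma blocks_prefix_sorted N : StronglySorted le (blocks_prefix al N).
Proof.
  induction N as [|N IH]; [constructor|].
  unfold blocks_prefix. rewrite seq_S, map_app, concat_app. simpl. rewrite app_nil_r.
  apply StronglySorted_app; [exact IH| |].
  - unfold block. simpl pred. destruct (2 <=? cf_a al (S N))%nat.
    + apply StronglySorted_map_seq. intros. nia.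
    + repeat constructor.
  - intros x y hx hy. apply In_blocks_prefix in hx as [k [j [hk [hv ex]]]].
    apply (In_block N y) in hy as [j' [hv' ey]].
    destruct (cand_order_across k j N j' hv hv' hk). lia.
Qed.

Lemma In_dedup_prefix N y :
  In y (dedup_first (blocks_prefix al N)) <-> In y (blocks_prefix al N).
Proof. unfold dedup_first. rewrite In_dedup_aux. simpl. tauto. Qed.

Lemma dedup_prefix_sorted N : StronglySorted lt (dedup_first (blocks_prefix al N)).
Proof. apply StronglySorted_dedup_aux, blocks_prefix_sorted. Qed.

Lemma In_filter_dedup_prefix N x y : In x (dedup_first (blocks_prefix al N)) ->
  In y (filter (fun z => z <? x) (dedup_first (blocks_prefix al N))) <->
  (y < x)%nat /\ inX al y.
Proof.
  intro hx. rewrite filter_In, Nat.ltb_lt, inX_iff_is_cand_q, In_dedup_prefix.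
  apply In_dedup_prefix, In_blocks_prefix in hx as [k0 [j0 [hk0 [hv0 ex]]]].
  split.
  - intros [hy hlt]. split; [exact hlt|].
    apply In_blocks_prefix in hy as [k [j [_ hj]]]. exists k, j. exact hj.
  - intros [hlt [k [j [hv ey]]]]. split; [|exact hlt].
    apply In_blocks_prefix. exists k, j. split; [|split; assumption].
    destruct (Nat.lt_ge_cases k N) as [hk|hk]; [exact hk|].
    destruct (cand_order_across k0 j0 k j hv0 hv ltac:(lia)). lia.
Qed.

End Approximation.

Theorem mainTheorem9 (alpha : R) (Hirr : irrational alpha) (H0 : 0 < alpha) (H1 : alpha < 1) :
  forall j x : nat, C_dedup_nth alpha j x <-> X_nth alpha j x.
Proof.
  intros j x.
  pose proof (dedup_prefix_sorted alpha Hirr H0 H1) as hsorted.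
  pose proof (In_blocks_prefix alpha Hirr H0 H1) as hblocks.
  pose proof (In_filter_dedup_prefix alpha Hirr H0 H1) as hbelow.
  pose proof (inX_iff_is_cand_q alpha Hirr H0 H1) as hX.
  split.
  - intros [N hN].
    apply nth_error_StronglySorted_lt in hN as [hx hlen]; [|apply hsorted].
    split.
    + apply hX. apply In_dedup_prefix, hblocks in hx as [k [j' [_ hv]]]. exists k, j'. exact hv.
    + exists (filter (fun z => z <? x) (dedup_first (blocks_prefix alpha N))).
      split; [apply NoDup_filter, StronglySorted_lt_NoDup, hsorted|].
      split; [intro y; apply hbelow, hx|exact hlen].
  - intros [hx [l [hnd [hl hlen]]]].
    apply hX in hx as [k [j0 hv]]. exists (S k).
    set (L := dedup_first (blocks_prefix alpha (S k))).
    assert (hxL : In x L) by (apply In_dedup_prefix, hblocks; exists k, j0; split; [lia|exact hv]).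
    apply nth_error_StronglySorted_lt; [apply hsorted|]. split; [exact hxL|].
    (* the entries of L below x and the list l both enumerate X below x without repetition *)
    assert (hF : NoDup (filter (fun z => z <? x) L))
      by (apply NoDup_filter, StronglySorted_lt_NoDup, hsorted).
    assert (hFl : incl (filter (fun z => z <? x) L) l)
      by (intros y hy; apply hl, (hbelow (S k) x y hxL), hy).
    assert (hlF : incl l (filter (fun z => z <? x) L))
      by (intros y hy; apply (hbelow (S k) x y hxL), hl, hy).
    pose proof (NoDup_incl_length hF hFl). pose proof (NoDup_incl_length hnd hlF). lia.
Qed.
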